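(* A finite simple graph $G$ admits an $\mathcal{F}$-free circular ordering if and only if $G$ is a forest.
   Context: A circular ordering of a finite set is obtained by placing its elements at distinct points of a circle; it is the set of triples $(x,y,z)$ of distinct elements such that clockwise from $x$ one meets $y$ before $z$. A circularly ordered graph is a graph together with a circular ordering of its vertices; isomorphism means a graph isomorphism preserving the circular orderings; $(H,C_H)$ is an induced circularly ordered subgraph of $(G,C_G)$ if $H$ is an induced subgraph of $G$ and $C_H$ is the restriction of $C_G$. A graph $G$ admits an $\mathcal{F}$-free circular ordering if there is a circular ordering $C$ of $V(G)$ such that no induced circularly ordered subgraph of $(G,C)$ is isomorphic to a member of $\mathcal{F}$. Here $\mathcal{F}$ consists of the following seven circularly ordered graphs, where in each case the vertices $v_1,v_2,\dots$ appear clockwise in this order and the listed edges are all the edges: (1) the triangle on $v_1,v_2,v_3$; (2) on $v_1,\dots,v_4$, edges $v_1v_2,v_2v_3,v_3v_4,v_4v_1$; (3) on $v_1,\dots,v_4$, edges $v_1v_2,v_2v_4,v_4v_3,v_3v_1$; (4) on $v_1,\dots,v_4$, edges $v_1v_3,v_2v_4$; (5) on $v_1,\dots,v_4$, edges $v_1v_3,v_1v_4,v_2v_4$; (6) on $v_1,\dots,v_5$, edges $v_1v_2,v_2v_3,v_3v_4,v_4v_5,v_5v_1$; (7) on $v_1,\dots,v_5$, edges $v_1v_2,v_2v_3,v_3v_4,v_4v_5$. *)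

From mathcomp Require Import all_boot.
Set Implicit Arguments. Unset Strict Implicit. Unset Printing Implicit Defensive.

(* A finite simple graph: vertex type T : finType, symmetric irreflexive e. *)

(* A circular ordering of T is represented by an injective placement
   pos : T -> nat (vertices placed clockwise in increasing order of pos,
   wrapping around).  cyc pos x y z : clockwise from x one meets y before z. *)
Definition cyc (T : Type) (pos : T -> nat) (x y z : T) : bool :=
  [|| (pos x < pos y < pos z)%N, (pos y < pos z < pos x)%N
    | (pos z < pos x < pos y)%N].

Definition pat_edge (k : nat) (E : seq (nat * nat)) (i j : 'I_k) : bool :=
  ((nat_of_ord i, nat_of_ord j) \in E) || ((nat_of_ord j, nat_of_ord i) \in E).

Definition contains_pattern (T : finType) (e : rel T) (pos : T -> nat)
    (k : nat) (E : seq (nat * nat)) : Prop :=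
  exists f : 'I_k -> T,
    [/\ injective f,
        (forall i j l : 'I_k, (i < j < l)%N -> cyc pos (f i) (f j) (f l))
      & (forall i j : 'I_k, i != j -> e (f i) (f j) = pat_edge E i j)].

Definition F_patterns : seq (nat * seq (nat * nat)) :=
  [:: (3, [:: (0,1); (1,2); (2,0)]);
      (4, [:: (0,1); (1,2); (2,3); (3,0)]);
      (4, [:: (0,1); (1,3); (3,2); (2,0)]);
      (4, [:: (0,2); (1,3)]);
      (4, [:: (0,2); (0,3); (1,3)]);
      (5, [:: (0,1); (1,2); (2,3); (3,4); (4,0)]);
      (5, [:: (0,1); (1,2); (2,3); (3,4)])]%N.

Definition F_free (T : finType) (e : rel T) (pos : T -> nat) : Prop :=
  forall P, P \in F_patterns -> ~ contains_pattern e pos P.1 P.2.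

Definition admits_F_free_circular_ordering (T : finType) (e : rel T) : Prop :=
  exists pos : T -> nat, injective pos /\ F_free e pos.

Definition forest (T : finType) (e : rel T) : Prop :=
  ~ exists s : seq T, [/\ (3 <= size s)%N, uniq s & cycle e s].

(* An F-free circular ordering has no triangle and no 4-cycle (patterns 1-3),
   and no two crossing edges: the endpoints of a crossing induce pattern 4 or 5
   unless they carry a triangle or a 4-cycle.  Hence for an edge ab of a cycle
   the rest of the cycle, a path avoiding a and b that cannot cross ab, stays on
   one side of ab; so a cycle of length at least 5 runs monotonically around the
   circle and its first five vertices induce pattern 6 or 7.

   Conversely a forest is placed leaf by leaf, each new leaf immediately next to
   its neighbour u, after or before u according to the colour of u in a proper
   2-colouring.  A leaf placed next to its neighbour creates no crossing, and the
   side rule keeps every clockwise path on four vertices starting at a vertex of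
   colour true; a clockwise path on five vertices would then contain two such
   paths starting at adjacent vertices of the same colour. *)

From mathcomp Require Import all_boot zify.
Set Implicit Arguments. Unset Strict Implicit. Unset Printing Implicit Defensive.

Ltac cyc_lia := unfold cyc in *; lia.

Section CyclicOrder.
Variables (T : Type) (p : T -> nat).

(* Points in clockwise order: the triples through the first point suffice. *)
Definition cyc4 a b c d := cyc p a b c && cyc p a c d.
Definition cyc5 a b c d x := cyc4 a b c d && cyc p a d x.

Definition same_side a b x y z :=
  [&& cyc p a b x, cyc p a b y & cyc p a b z] ||
  [&& cyc p b a x, cyc p b a y & cyc p b a z].

Lemma cycC a b c : cyc p a b c = cyc p b c a.
Proof. by apply/idP/idP; cyc_lia. Qed.

Lemma cyc_flip a b c :
  p a != p b -> p a != p c -> p b != p c -> cyc p b a c = ~~ cyc p a b c.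
Proof. by move=> *; apply/idP/idP; cyc_lia. Qed.

Lemma cyc_total a b c :
  p a != p b -> p a != p c -> p b != p c -> cyc p a b c || cyc p a c b.
Proof. cyc_lia. Qed.

Lemma cyc4_cases a b c d : cyc p a b c ->
  p d != p a -> p d != p b -> p d != p c ->
  [|| cyc4 a b c d, cyc4 a d b c | cyc4 a b d c].
Proof. rewrite /cyc4; cyc_lia. Qed.

Lemma cyc4C a b c d : cyc4 a b c d -> cyc4 b c d a.
Proof. rewrite /cyc4; cyc_lia. Qed.

Lemma cyc4_of_switch a b x y :
  uniq [:: p a; p b; p x; p y] -> cyc p a b x != cyc p a b y ->
  cyc4 a y b x || cyc4 a x b y.
Proof. rewrite /= !inE /cyc4; cyc_lia. Qed.

Lemma cyc_neq a b c : cyc p a b c -> [/\ p a != p b, p b != p c & p c != p a].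
Proof. by move=> abc; split; apply/eqP; move: abc; cyc_lia. Qed.

Lemma cyc_succ x y z : p y = p x + 1 -> cyc p y x z = false.
Proof. by move=> yx; apply/negP; cyc_lia. Qed.

Lemma cyc4_succ_chord x y c d : p y = p x + 1 -> ~~ cyc4 x c y d && ~~ cyc4 y c x d.
Proof. by move=> yx; rewrite /cyc4; apply/andP; split; apply/negP; cyc_lia. Qed.

Lemma cyc_uniq a b c : cyc p a b c -> uniq [:: p a; p b; p c].
Proof. rewrite /= !inE; cyc_lia. Qed.

Lemma cyc4_uniq a b c d : cyc4 a b c d -> uniq [:: p a; p b; p c; p d].
Proof. rewrite /= !inE /cyc4; cyc_lia. Qed.

Lemma cyc5_uniq a b c d x : cyc5 a b c d x -> uniq [:: p a; p b; p c; p d; p x].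
Proof. rewrite /= !inE /cyc5 /cyc4; cyc_lia. Qed.

Lemma cyc5_of_same_sides x0 x1 x2 x3 x4 :
  same_side x0 x1 x2 x3 x4 -> same_side x1 x2 x3 x4 x0 -> same_side x2 x3 x4 x0 x1 ->
  cyc5 x0 x1 x2 x3 x4 || cyc5 x4 x3 x2 x1 x0.
Proof.
rewrite /same_side /cyc5 /cyc4.
by do 3!case/orP=> /and3P[? ? ?]; cyc_lia.
Qed.

End CyclicOrder.

Section InsertNext.
Variables (T : eqType) (pos : T -> nat) (v u : T) (after : bool).

Definition insert_next x :=
  if x == v then pos u * 2 + (if after then 3 else 1) else pos x * 2 + 2.

Lemma insert_next_old x : x != v -> insert_next x = pos x * 2 + 2.
Proof. by rewrite /insert_next => /negbTE->. Qed.

Lemma cyc_insert_next x y z : x != v -> y != v -> z != v ->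
  cyc insert_next x y z = cyc pos x y z.
Proof. by move=> xv yv zv; rewrite /cyc !insert_next_old //; apply/idP/idP; lia. Qed.

Lemma cyc4_insert_next a b c d : a != v -> b != v -> c != v -> d != v ->
  cyc4 insert_next a b c d = cyc4 pos a b c d.
Proof. by move=> *; rewrite /cyc4 !cyc_insert_next. Qed.

Lemma insert_next_adjacent : u != v ->
  if after then insert_next v = insert_next u + 1 else insert_next u = insert_next v + 1.
Proof. by move=> uv; rewrite /insert_next eqxx (negbTE uv); case: after; lia. Qed.

End InsertNext.

Section Patterns.
Variables (T : finType) (e : rel T) (pos : T -> nat).
Hypothesis e_sym : symmetric e.

Definition pat_adj (E : seq (nat * nat)) i j := ((i, j) \in E) || ((j, i) \in E).

Lemma pattern_of_seq E (s : seq T) x0 : uniq s ->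
  (forall i j l, i < j < l -> l < size s ->
     cyc pos (nth x0 s i) (nth x0 s j) (nth x0 s l)) ->
  (forall i j, i < j -> j < size s -> e (nth x0 s i) (nth x0 s j) = pat_adj E i j) ->
  contains_pattern e pos (size s) E.
Proof.
move=> s_uniq s_cyc s_adj; exists (fun i : 'I_(size s) => nth x0 s i); split.
- by move=> i j /eqP; rewrite nth_uniq // => /eqP/val_inj.
- by move=> i j l ijl; apply: s_cyc.
- move=> i j; rewrite -(inj_eq val_inj) /pat_edge -/(pat_adj E i j).
  case: (ltngtP i j) => [ij|ji|] // _; first exact: s_adj.
  by rewrite e_sym s_adj // /pat_adj orbC.
Qed.

Lemma pattern3 E a b c : cyc pos a b c ->
  e a b = pat_adj E 0 1 -> e a c = pat_adj E 0 2 -> e b c = pat_adj E 1 2 ->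
  contains_pattern e pos 3 E.
Proof.
move=> abc *; apply: (@pattern_of_seq E [:: a; b; c] a).
- by apply: (@map_uniq _ _ pos); apply: cyc_uniq abc.
- by clear -abc; move: abc => + [|[|[|i]]] [|[|[|j]]] [|[|[|l]]] //=; cyc_lia.
- by move=> [|[|[|i]]] [|[|[|j]]].
Qed.

Lemma pattern4 E a b c d : cyc4 pos a b c d ->
  e a b = pat_adj E 0 1 -> e a c = pat_adj E 0 2 -> e a d = pat_adj E 0 3 ->
  e b c = pat_adj E 1 2 -> e b d = pat_adj E 1 3 -> e c d = pat_adj E 2 3 ->
  contains_pattern e pos 4 E.
Proof.
move=> abcd ? ? ? ? ? ?; apply: (@pattern_of_seq E [:: a; b; c; d] a).
- by apply: (@map_uniq _ _ pos); apply: cyc4_uniq abcd.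
- clear -abcd; move: abcd; rewrite /cyc4.
  by move=> + [|[|[|[|i]]]] [|[|[|[|j]]]] [|[|[|[|l]]]] //=; cyc_lia.
- by move=> [|[|[|[|i]]]] [|[|[|[|j]]]].
Qed.

Lemma pattern5 E a b c d x : cyc5 pos a b c d x ->
  e a b = pat_adj E 0 1 -> e a c = pat_adj E 0 2 -> e a d = pat_adj E 0 3 ->
  e a x = pat_adj E 0 4 -> e b c = pat_adj E 1 2 -> e b d = pat_adj E 1 3 ->
  e b x = pat_adj E 1 4 -> e c d = pat_adj E 2 3 -> e c x = pat_adj E 2 4 ->
  e d x = pat_adj E 3 4 -> contains_pattern e pos 5 E.
Proof.
move=> h ? ? ? ? ? ? ? ? ? ?; apply: (@pattern_of_seq E [:: a; b; c; d; x] a).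
- by apply: (@map_uniq _ _ pos); apply: cyc5_uniq h.
- clear -h; move: h; rewrite /cyc5 /cyc4.
  by move=> + [|[|[|[|[|i]]]]] [|[|[|[|[|j]]]]] [|[|[|[|[|l]]]]] //=; cyc_lia.
- by move=> [|[|[|[|[|i]]]]] [|[|[|[|[|j]]]]].
Qed.

Lemma pattern_vertices n E : contains_pattern e pos n.+1 E ->
  exists g : nat -> T, [/\ {in [pred i | i <= n] &, injective g},
    forall i j l, i < j < l -> l <= n -> cyc pos (g i) (g j) (g l) &
    forall i j, i <= n -> j <= n -> i != j -> e (g i) (g j) = pat_adj E i j].
Proof.
case=> f [f_inj f_cyc f_adj]; exists (fun i => f (inord i)); split.
- by move=> i j i_n j_n /f_inj /(congr1 (@nat_of_ord _)); rewrite !inordK.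
- by move=> i j l ijl l_n; apply: f_cyc; rewrite !inordK //; lia.
- move=> i j i_n j_n ij; rewrite f_adj; first by rewrite /pat_edge !inordK.
  by rewrite -(inj_eq val_inj) /= !inordK.
Qed.

Lemma pattern_cycle n E (s : seq nat) : contains_pattern e pos n.+1 E ->
  3 <= size s -> uniq s -> all [pred i | i <= n] s ->
  cycle [rel i j | (i != j) && pat_adj E i j] s -> ~ forest e.
Proof.
case/pattern_vertices=> g [g_inj _ g_adj] s3 s_uniq s_n s_cycle; apply.
exists (map g s); split; first by rewrite size_map.
  by rewrite map_inj_in_uniq // => i j /(allP s_n) i_n /(allP s_n) j_n; apply: g_inj.
rewrite cycle_map; apply: (sub_in_cycle _ s_n s_cycle) => i j i_n j_n /andP[ij E_ij].
by rewrite /= g_adj.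
Qed.

End Patterns.

(* [F_pattern i] is the paper's pattern (i), 1 <= i <= 7. *)
Definition F_pattern i := nth (0, [::]) F_patterns i.-1.

Section FFreeOrdering.
Variables (T : finType) (e : rel T) (pos : T -> nat).
Hypotheses (e_sym : symmetric e) (e_irr : irreflexive e).
Hypotheses (pos_inj : injective pos) (pos_F_free : F_free e pos).

Ltac pattern_edges :=
  match goal with |- ?l = ?b => let v := eval vm_compute in b in change (l = v) end;
  first [ done | by rewrite e_sym | exact/negbTE | by rewrite e_sym; apply/negbTE ].

Lemma no_pattern i : 0 < i <= 7 -> ~ contains_pattern e pos (F_pattern i).1 (F_pattern i).2.
Proof. by move=> i_F; apply/pos_F_free/mem_nth; rewrite [size _]/=; lia. Qed.

Lemma pos_neq x y : x != y -> pos x != pos y.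
Proof. by rewrite (inj_eq pos_inj). Qed.

Lemma pos_neqW x y : pos x != pos y -> x != y.
Proof. by apply: contra_neq => ->. Qed.

Lemma edge_neq x y : e x y -> x != y.
Proof. by apply: contraTneq => ->; rewrite e_irr. Qed.

Lemma edge_pos_neq x y : e x y -> pos x != pos y.
Proof. by move/edge_neq/pos_neq. Qed.

Lemma no_triangle a b c : e a b -> e b c -> e c a -> False.
Proof.
wlog abc : b c / cyc pos a b c => [triangle ab bc ca|ab bc ca].
  have ac : e a c by rewrite e_sym.
  case/orP: (cyc_total (edge_pos_neq ab) (edge_pos_neq ac) (edge_pos_neq bc)) => [abc|acb].
    exact: triangle abc ab bc ca.
  by apply: (triangle c b acb); rewrite e_sym.
by apply: (@no_pattern 1) => //; apply: (pattern3 e_sym abc); pattern_edges.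
Qed.

Lemma no_square a b c d : e a b -> e b c -> e c d -> e d a -> a != c -> b != d -> False.
Proof.
wlog abc : a c / cyc pos a b c => [square ab bc cd da ac bd|ab bc cd da ac bd].
  case/orP: (cyc_total (edge_pos_neq ab) (pos_neq ac) (edge_pos_neq bc)) => [abc|acb].
    exact: square abc ab bc cd da ac bd.
  apply: (square c a); rewrite // 1?e_sym // 1?eq_sym //.
  by rewrite -cycC.
have nac : ~~ e a c by apply/negP => ac'; apply: (no_triangle ab bc); rewrite e_sym.
have nbd : ~~ e b d by apply/negP => bd'; apply: (no_triangle bc cd); rewrite e_sym.
have da' : pos d != pos a by exact: edge_pos_neq da.
have db' : pos d != pos b by rewrite eq_sym pos_neq.
have dc' : pos d != pos c by rewrite eq_sym edge_pos_neq.
case/or3P: (cyc4_cases abc da' db' dc').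
- by move=> h; apply: (@no_pattern 2) => //; apply: (pattern4 e_sym h); pattern_edges.
- by move=> h; apply: (@no_pattern 3) => //; apply: (pattern4 e_sym h); pattern_edges.
- by move=> h; apply: (@no_pattern 3) => //; apply: (pattern4 e_sym h); pattern_edges.
Qed.

Lemma crossing_sides a c b d : cyc4 pos a c b d -> e a b -> e c d ->
  ~~ e a c -> ~~ e c b -> ~~ e b d -> False.
Proof.
move=> h ab cd nac ncb nbd; case: (boolP (e a d)) => [ad|nad].
- by apply: (@no_pattern 5) => //; apply: (pattern4 e_sym h); pattern_edges.
- by apply: (@no_pattern 4) => //; apply: (pattern4 e_sym h); pattern_edges.
Qed.

Lemma crossing_side_free a c b d : cyc4 pos a c b d -> e a b -> e c d -> ~~ e a c.
Proof.
move=> h ab cd; apply/negP => ac.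
move: (h); rewrite /cyc4 => /andP[acb abd].
have [[_ cb _] [_ _ da]] := (cyc_neq acb, cyc_neq abd).
have ncb : ~~ e c b by apply/negP => cb'; apply: (no_triangle ac cb'); rewrite e_sym.
have nda : ~~ e d a by apply/negP; apply: no_triangle ac cd.
have nbd : ~~ e b d.
  apply/negP => bd; apply: (@no_square a c d b ac cd); rewrite 1?e_sym //.
  - by rewrite eq_sym pos_neqW.
  - exact: pos_neqW.
have ba : e b a by rewrite e_sym.
exact: crossing_sides (cyc4C h) cd ba ncb nbd nda.
Qed.

Lemma no_crossing a c b d : cyc4 pos a c b d -> e a b -> e c d -> False.
Proof.
move=> h ab cd; have h' := cyc4C h; have h'' := cyc4C h'.
have ba : e b a by rewrite e_sym.
have dc : e d c by rewrite e_sym.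
apply: (crossing_sides h ab cd).
- exact: crossing_side_free h ab cd.
- exact: crossing_side_free h' cd ba.
- exact: crossing_side_free h'' ba dc.
Qed.

Lemma no_monotone_P5 a b c d x : cyc5 pos a b c d x ->
  e a b -> e b c -> e c d -> e d x -> False.
Proof.
move=> h ab bc cd dx.
have := cyc5_uniq h; rewrite /= !inE !negb_or.
case/and5P=> /and4P[_ ac _ _] /and3P[_ bd _] /andP[_ cx] _ _.
have nac : ~~ e a c by apply/negP => ac'; apply: (no_triangle ab bc); rewrite e_sym.
have nbd : ~~ e b d by apply/negP => bd'; apply: (no_triangle bc cd); rewrite e_sym.
have ncx : ~~ e c x by apply/negP => cx'; apply: (no_triangle cd dx); rewrite e_sym.
have nad : ~~ e a d.
  by apply/negP => ad; apply: (no_square ab bc cd); rewrite 1?e_sym //; apply: pos_neqW.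
have nbx : ~~ e b x.
  by apply/negP => bx; apply: (no_square bc cd dx); rewrite 1?e_sym //; apply: pos_neqW.
case: (boolP (e a x)) => [ax|nax].
- by apply: (@no_pattern 6) => //; apply: (pattern5 e_sym h); pattern_edges.
- by apply: (@no_pattern 7) => //; apply: (pattern5 e_sym h); pattern_edges.
Qed.

Lemma chord_side a b x y : e a b -> e x y -> x \notin [:: a; b] -> y \notin [:: a; b] ->
  cyc pos a b x = cyc pos a b y.
Proof.
move=> ab xy xab yab; apply/eqP/negPn/negP => switch.
have pos_uniq : uniq (map pos [:: a; b; x; y]).
  rewrite map_inj_uniq //= !inE (edge_neq xy) andbT.
  move: xab yab; rewrite !inE !negb_or => /andP[xa xb] /andP[ya yb].
  by rewrite (edge_neq ab) !(eq_sym a) !(eq_sym b) xa xb ya yb.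
case/orP: (cyc4_of_switch pos_uniq switch) => h; last exact: no_crossing h ab xy.
by apply: no_crossing h ab _; rewrite e_sym.
Qed.

Lemma path_side a b x s : e a b -> path e x s -> a \notin x :: s -> b \notin x :: s ->
  {in x :: s, forall z, cyc pos a b z = cyc pos a b x}.
Proof.
move=> ab; elim: s x => [|y s IH] x.
  by move=> _ _ _ z; rewrite inE => /eqP->.
rewrite [path _ _ _]/= !(in_cons x) => /andP[xy ys] /norP[ax ays] /norP[bx bys] z.
have side_y : cyc pos a b y = cyc pos a b x.
  apply: (chord_side ab (_ : e y x)); rewrite 1?e_sym // !inE negb_or.
  - by rewrite (memPn ays y (mem_head _ _)) (memPn bys y (mem_head _ _)).
  - by rewrite eq_sym ax eq_sym bx.
by rewrite in_cons => /orP[/eqP-> // | zys]; rewrite -side_y (IH y ys ays bys).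
Qed.

Lemma cycle_edge_side a b c q :
  uniq [:: a, b, c & q] -> cycle e [:: a, b, c & q] ->
  forall x y z, x \in c :: q -> y \in c :: q -> z \in c :: q -> same_side pos a b x y z.
Proof.
rewrite cons_uniq in_cons negb_or cons_uniq [cycle _ _]/= rcons_path.
case/andP=> /andP[_ a_cq] /andP[b_cq _] /and4P[ab bc cq _].
have side := path_side ab cq a_cq b_cq.
have flip z : z \in c :: q -> cyc pos b a z = ~~ cyc pos a b c.
  move=> zq; rewrite -(side z zq) cyc_flip ?pos_neq ?(edge_neq ab) //.
    by rewrite eq_sym (memPn a_cq z zq).
  by rewrite eq_sym (memPn b_cq z zq).
move=> x y z xq yq zq; rewrite /same_side !flip // !side //.
by case: (cyc pos a b c).
Qed.

Lemma no_long_cycle x0 x1 x2 x3 x4 q :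
  uniq [:: x0, x1, x2, x3, x4 & q] -> ~~ cycle e [:: x0, x1, x2, x3, x4 & q].
Proof.
set s := [:: x0, x1, x2, x3, x4 & q] => us; apply/negP => cs.
have u1 : uniq [:: x1, x2, x3, x4 & q ++ [:: x0]] by rewrite -(rot_uniq 1) in us.
have c1 : cycle e [:: x1, x2, x3, x4 & q ++ [:: x0]] by rewrite -(rot_cycle 1) in cs.
have u2 : uniq [:: x2, x3, x4 & q ++ [:: x0; x1]] by rewrite -(rot_uniq 2) in us.
have c2 : cycle e [:: x2, x3, x4 & q ++ [:: x0; x1]] by rewrite -(rot_cycle 2) in cs.
have := cyc5_of_same_sides (cycle_edge_side us cs (x := x2) (y := x3) (z := x4) _ _ _)
  (cycle_edge_side u1 c1 (x := x3) (y := x4) (z := x0) _ _ _)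
  (cycle_edge_side u2 c2 (x := x4) (y := x0) (z := x1) _ _ _).
rewrite !(inE, mem_cat, eqxx, orbT) => /(_ isT isT isT isT isT isT isT isT isT).
move: cs; rewrite [cycle _ _]/= => /and5P[e01 e12 e23 e34 _].
case/orP=> h; first exact: no_monotone_P5 h e01 e12 e23 e34.
by apply: (no_monotone_P5 h); rewrite e_sym.
Qed.

Lemma F_free_forest : forest e.
Proof.
case=> -[|x0 [|x1 [|x2 [|x3 [|x4 q]]]]] [//= _ us cs].
- by move: cs => /and4P[e01 e12 e20 _]; apply: no_triangle e01 e12 e20.
- move: us cs; rewrite !inE !negb_or => /and4P[/and3P[_ x02 _] /andP[_ x13] _ _].
  by case/and5P=> e01 e12 e23 e30 _; apply: no_square e01 e12 e23 e30 x02 x13.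
- by move: cs; apply/negP/no_long_cycle.
Qed.

End FFreeOrdering.

Section Layout.
Variables (T : finType) (e : rel T).
Hypotheses (e_sym : symmetric e) (e_irr : irreflexive e).

Record layout (S : {set T}) (pos : T -> nat) (col : T -> bool) : Prop := Layout {
  layout_inj : {in S &, injective pos};
  layout_noncrossing : forall a c b d, a \in S -> c \in S -> b \in S -> d \in S ->
    cyc4 pos a c b d -> e a b -> e c d -> False;
  layout_P4 : forall x1 x2 x3 x4, x1 \in S -> x2 \in S -> x3 \in S -> x4 \in S ->
    cyc4 pos x1 x2 x3 x4 -> e x1 x2 -> e x2 x3 -> e x3 x4 -> col x1;
  layout_col : {in S &, forall x y, e x y -> col x != col y}
}.

Lemma layout_small (S : {set T}) (pos : T -> nat) (col : T -> bool) :
  #|S| <= 1 -> layout S pos col.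
Proof.
move/card_le1_eqP => S1.
have no_edge x y : x \in S -> y \in S -> ~~ e x y by move=> xS yS; rewrite (S1 x y xS yS) e_irr.
split=> [x y xS yS _ | a c b d aS _ bS _ _ ab | x1 x2 x3 x4 x1S x2S _ _ _ x12 | x y xS yS xy].
- exact: S1.
- by move: (no_edge a b aS bS); rewrite ab.
- by move: (no_edge x1 x2 x1S x2S); rewrite x12.
- by move: (no_edge x y xS yS); rewrite xy.
Qed.

Section AddLeaf.
Variables (S : {set T}) (pos : T -> nat) (col : T -> bool) (v u : T).
Hypotheses (lay : layout S pos col) (vNS : v \notin S) (uS : u \in S).
Hypothesis v_leaf : {in S, forall y, e v y -> y = u}.

Local Notation P := (insert_next pos v u (col u)).
Local Notation col' := (fun x => if x == v then ~~ col u else col x).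

Let old_neq x : x \in S -> x != v.
Proof. by apply: contraTneq => ->. Qed.

Let mem_old x : x != v -> (x \in v |: S) = (x \in S).
Proof. by rewrite in_setU1 => /negbTE->. Qed.

Let u_neq_v : u != v := old_neq uS.

Let P_adjacent := insert_next_adjacent pos (col u) u_neq_v.

Let v_nbr y : y \in v |: S -> e v y -> y = u.
Proof. by case/setU1P=> [->|/v_leaf//]; rewrite e_irr. Qed.

Let v_nbr' y : y \in v |: S -> e y v -> y = u.
Proof. by rewrite e_sym; apply: v_nbr. Qed.

Let chord_uv c d : ~~ cyc4 P u c v d && ~~ cyc4 P v c u d.
Proof.
move: P_adjacent; case: (col u) => adj; first exact: cyc4_succ_chord c d adj.
by rewrite andbC; exact: cyc4_succ_chord c d adj.
Qed.

Lemma add_leaf_inj : {in v |: S &, injective P}.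
Proof.
have P_v : P v = pos u * 2 + (if col u then 3 else 1) by rewrite /insert_next eqxx.
move=> x y /setU1P[->|xS] /setU1P[->|yS] //; rewrite ?P_v ?insert_next_old ?old_neq //.
1-2: by case: (col u); lia.
by move=> xy; apply: (layout_inj lay) => //; lia.
Qed.

Lemma add_leaf_noncrossing a c b d : a \in v |: S -> c \in v |: S -> b \in v |: S ->
  d \in v |: S -> cyc4 P a c b d -> e a b -> e c d -> False.
Proof.
have chord_v a' c' b' d' : a' \in v |: S -> b' \in v |: S -> v \in [:: a'; b'] ->
    cyc4 P a' c' b' d' -> e a' b' -> False.
  move=> aS' bS'; rewrite !inE => /orP[]/eqP<- h ab.
    by move: h (chord_uv c' d'); rewrite (v_nbr bS' ab) => -> /andP[].
  by move: h (chord_uv c' d'); rewrite (v_nbr' aS' ab) => -> /andP[].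
move=> aS cS bS dS h ab cd.
have [vab|] := boolP (v \in [:: a; b]); first exact: chord_v _ _ _ _ aS bS vab h ab.
rewrite !inE !negb_or !(eq_sym v) => /andP[av bv].
have [vcd|] := boolP (v \in [:: c; d]); first exact: chord_v _ _ _ _ cS dS vcd (cyc4C h) cd.
rewrite !inE !negb_or !(eq_sym v) => /andP[cv dv].
rewrite cyc4_insert_next // in h.
move: aS cS bS dS; rewrite !in_setU1 (negbTE av) (negbTE bv) (negbTE cv) (negbTE dv) /=.
by move=> aS cS bS dS; apply: (layout_noncrossing lay aS cS bS dS h ab cd).
Qed.

Lemma add_leaf_P4 x1 x2 x3 x4 :
  x1 \in v |: S -> x2 \in v |: S -> x3 \in v |: S -> x4 \in v |: S ->
  cyc4 P x1 x2 x3 x4 -> e x1 x2 -> e x2 x3 -> e x3 x4 -> col' x1.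
Proof.
move=> x1S x2S x3S x4S h e12 e23 e34 /=.
have := cyc4_uniq h; rewrite /= !inE => P_uniq.
have [x1v|x1v] := eqVneq x1 v.
  subst x1; have x2u := v_nbr x2S e12; subst x2.
  move: P_adjacent h; case: (col u) => // adj.
  by rewrite /cyc4 (cyc_succ _ adj).
have [x2v|x2v] := eqVneq x2 v.
  subst x2; rewrite (v_nbr' x1S e12) (v_nbr x3S e23) in P_uniq.
  by rewrite eqxx /= orbT in P_uniq.
have [x3v|x3v] := eqVneq x3 v.
  subst x3; rewrite (v_nbr' x2S e23) (v_nbr x4S e34) in P_uniq.
  by rewrite eqxx orbT /= andbF in P_uniq.
rewrite mem_old // in x1S; rewrite mem_old // in x2S.
have [x4v|x4v] := eqVneq x4 v.
  subst x4; have x3u := v_nbr' x3S e34; subst x3.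
  move: P_adjacent h; case cu: (col u) => adj.
    move: (layout_col lay x1S x2S e12) (layout_col lay x2S uS e23); rewrite cu.
    by case: (col x1); case: (col x2).
  by rewrite /cyc4 [cyc _ x1 u v]cycC (cyc_succ _ adj) andbF.
rewrite mem_old // in x3S; rewrite mem_old // in x4S; rewrite cyc4_insert_next // in h.
exact: (layout_P4 lay x1S x2S x3S x4S h e12 e23 e34).
Qed.

Lemma add_leaf_col : {in v |: S &, forall x y, e x y -> col' x != col' y}.
Proof.
move=> x y xS yS xy /=.
have [xv|xv] := eqVneq x v.
  subst x; have yu := v_nbr yS xy; subst y.
  by rewrite (negbTE u_neq_v); case: (col u).
have [yv|yv] := eqVneq y v.
  subst y; have xu := v_nbr' xS xy; subst x.
  by case: (col u).
rewrite mem_old // in xS; rewrite mem_old // in yS.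
exact: (layout_col lay xS yS xy).
Qed.

Lemma layout_add_leaf : layout (v |: S) P col'.
Proof.
exact: Layout add_leaf_inj add_leaf_noncrossing add_leaf_P4 add_leaf_col.
Qed.

End AddLeaf.

Lemma forest_long_paths (S : {set T}) : forest e ->
  {in S, forall v, exists x y, [/\ x \in S, y \in S, e v x, e v y & x != y]} ->
  forall x0, x0 \in S ->
  forall n, exists x t, [/\ size t = n, uniq (x :: t), x \in S & path e x t].
Proof.
move=> F two x0 x0S; elim=> [|n [x [t [tn xt_uniq xS xt]]]]; first by exists x0, [::].
have [y [yS xy t_y]] : exists y, [/\ y \in S, e x y & ohead t != Some y].
  have [y1 [y2 [y1S y2S xy1 xy2 y12]]] := two x xS.
  have [t_y1|] := eqVneq (ohead t) (Some y1); last by exists y1.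
  by exists y2; rewrite t_y1 (inj_eq Some_inj).
have [yxt|yNxt] := boolP (y \in x :: t); last first.
  by exists y, (x :: t); rewrite cons_uniq yNxt xt_uniq /= tn yS e_sym xy xt.
exfalso; have yx : y != x by apply: contraTneq xy => ->; rewrite e_irr.
move: yxt xt_uniq xt t_y; rewrite in_cons (negbTE yx).
case/splitPr=> [[|z t1] t2] xt_uniq xt; first by rewrite /= eqxx.
move=> _; apply: F; exists (x :: rcons (z :: t1) y); split; first by rewrite /= size_rcons.
  by move: xt_uniq; rewrite -[y :: t2]cat1s catA cats1 -cat_cons cat_uniq => /andP[].
rewrite /cycle rcons_path last_rcons rcons_path [e y x]e_sym xy andbT.
by move: xt; rewrite cat_path => /andP[-> /andP[]].
Qed.

Lemma forest_leaf (S : {set T}) : forest e -> S != set0 ->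
  exists2 v, v \in S & {in S &, forall x y, e v x -> e v y -> x = y}.
Proof.
move=> F /set0Pn[x0 x0S].
case: (pickP [pred v | (v \in S) &&
    ~~ [exists x in S, exists y in S, [&& e v x, e v y & x != y]]]).
  move=> v /andP[vS /exists_inPn v_leaf]; exists v => // x y xS yS vx vy.
  apply/eqP; apply: contraNT (v_leaf x xS) => xy.
  by apply/exists_inP; exists y; rewrite ?vx ?vy.
move=> no_leaf.
have two : {in S, forall v, exists x y, [/\ x \in S, y \in S, e v x, e v y & x != y]}.
  move=> v vS; move: (no_leaf v); rewrite /= vS negbK => /exists_inP[x xS].
  by case/exists_inP=> y yS /and3P[vx vy xy]; exists x, y.
have [x [t [tn xt_uniq _ _]]] := forest_long_paths F two x0S #|T|.
by move: (card_uniqP xt_uniq) (max_card (mem (x :: t))); rewrite /= tn => ->; rewrite ltnn.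
Qed.

Lemma forest_layout : forest e -> forall S : {set T}, exists pos col, layout S pos col.
Proof.
move=> F S; have [n] := ubnP #|S|; elim: n S => // n IH S; rewrite ltnS => S_n.
have [S_small|S_big] := leqP #|S| 1.
  by exists (fun _ => 0), (fun _ => true); apply: layout_small.
have [v vS v_leaf] : exists2 v, v \in S & {in S &, forall x y, e v x -> e v y -> x = y}.
  by apply: forest_leaf F _; rewrite -card_gt0; lia.
have S0_card : #|S :\ v| = #|S|.-1 by rewrite (cardsD1 v S) vS.
have [pos [col lay]] : exists pos col, layout (S :\ v) pos col by apply: IH; lia.
have [u uS0 u_only] : exists2 u, u \in S :\ v & {in S :\ v, forall y, e v y -> y = u}.
  case: (pickP [pred y in S :\ v | e v y]) => [u /andP[uS0 vu] | no_nbr].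
    exists u => // y yS0 vy; move: yS0 uS0; rewrite !in_setD1 => /andP[_ yS] /andP[_ uS].
    exact: v_leaf.
  have [u uS0] : exists u, u \in S :\ v by apply/set0Pn; rewrite -card_gt0; lia.
  by exists u => // y yS0 vy; move: (no_nbr y); rewrite /= yS0 vy.
exists (insert_next pos v u (col u)), (fun x => if x == v then ~~ col u else col x).
by rewrite -(setD1K vS); apply: layout_add_leaf lay _ uS0 u_only; rewrite setD11.
Qed.

Lemma layout_no_crossing_pattern pos col E : layout [set: T] pos col ->
  pat_adj E 0 2 -> pat_adj E 1 3 -> ~ contains_pattern e pos 4 E.
Proof.
move=> lay E02 E13 /pattern_vertices[g [_ g_cyc g_adj]].
apply: (layout_noncrossing lay (a := g 0) (c := g 1) (b := g 2) (d := g 3));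
  rewrite ?in_setT ?g_adj //.
by rewrite /cyc4 !g_cyc.
Qed.

Lemma layout_F_free pos col : forest e -> layout [set: T] pos col -> F_free e pos.
Proof.
move=> F lay P /(nthP (0, [::])) [i i7 <-] {P}.
case: i i7 => [|[|[|[|[|[|[|i]]]]]]] // _ /= P_in.
- exact: (pattern_cycle (s := [:: 0; 1; 2]) P_in).
- exact: (pattern_cycle (s := [:: 0; 1; 2; 3]) P_in).
- exact: (pattern_cycle (s := [:: 0; 1; 3; 2]) P_in).
- by apply: (layout_no_crossing_pattern lay _ _ P_in).
- by apply: (layout_no_crossing_pattern lay _ _ P_in).
- exact: (pattern_cycle (s := [:: 0; 1; 2; 3; 4]) P_in).
- have [g [_ g_cyc g_adj]] := pattern_vertices P_in.
  have P4 k : k <= 1 -> col (g k).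
    move=> k1; have h : cyc4 pos (g k) (g k.+1) (g k.+2) (g k.+3).
      by rewrite /cyc4 !g_cyc //; lia.
    apply: (layout_P4 lay (in_setT _) (in_setT _) (in_setT _) (in_setT _) h);
      by case: k k1 {h} => [|[]] // _; rewrite g_adj.
  have := layout_col lay (in_setT (g 0)) (in_setT (g 1)).
  by rewrite g_adj // P4 // P4 // => /(_ isT).
Qed.

End Layout.

Theorem theorem4 (T : finType) (e : rel T) :
  symmetric e -> irreflexive e ->
  (admits_F_free_circular_ordering e <-> forest e).
Proof.
move=> e_sym e_irr; split.
  by case=> pos [pos_inj pos_F_free]; apply: F_free_forest pos_inj pos_F_free.
move=> F; have [pos [col lay]] := forest_layout e_sym e_irr F [set: T].
exists pos; split; last exact: layout_F_free lay.
by move=> x y; apply: (layout_inj lay); rewrite in_setT.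
Qed.
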